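(* Let $\sigma$ be a super filling of $\mathrm{dg}(\lambda)$ (order $<_2$) that is not $\Phi$-trivial, with distinguished label $a$, and let $r$ be the row of its distinguished cell. Let $u$ be any cell in row $r$ with $|\sigma(u)|=a$. Then $\mathrm{maj}(\Phi_u(\sigma))=\mathrm{maj}(\sigma)+1$ if $\sigma(u)=a$, and $\mathrm{maj}(\Phi_u(\sigma))=\mathrm{maj}(\sigma)-1$ if $\sigma(u)=\bar a$.
   Context: Let $\lambda=(\lambda_1\ge\dots\ge\lambda_k>0)$ be a partition; $\mathrm{dg}(\lambda)=\{(r,i):1\le i\le k,1\le r\le\lambda_i\}$, $(r,i)$ being row $r$ from the bottom and column $i$ from the left (columns bottom-justified of heights $\lambda_i$); $\mathrm{leg}((r,i))=\lambda_i-r$. $\mathcal A=\{1,\bar1,2,\bar2,\dots\}$ consists of positive letters $i$ and negative letters $\bar i$, $|i|=|\bar i|=i$, totally ordered by $<_2$: $0<1<2<3<\cdots<\bar3<\bar2<\bar1$. $I(a,b)=1$ if $a>b$ or $a=b$ is negative, and $I(a,b)=0$ if $a<b$ or $a=b$ is positive. A super filling is $\sigma:\mathrm{dg}(\lambda)\to\mathcal A$; a cell $u=(r,i)$, $r>1$, is a descent if $I(\sigma(u),\sigma((r-1,i)))=1$, and $\mathrm{maj}(\sigma)=\sum_{\text{descents }u}(\mathrm{leg}(u)+1)$. The reading order goes through rows top to bottom, each row right to left. $\Phi_u(\sigma)$ changes the sign ($i\leftrightarrow\bar i$) of the entry in cell $u$. The distinguished label of $\sigma$ is the smallest positive integer $a$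 such that some cell $(r,j)$ has $|\sigma((r,j))|=a$ and $r>a$; if no such $a$ exists, $\sigma$ is $\Phi$-trivial. If $a$ exists, the distinguished cell is the first cell in reading order whose entry has absolute value $a$. *)

From mathcomp Require Import all_boot.
Set Implicit Arguments. Unset Strict Implicit. Unset Printing Implicit Defensive.

(* Letters of the super alphabet: Pos i = i, Neg i = \bar i (i >= 1 required
   for entries of a filling). *)
Inductive letter := Pos of nat | Neg of nat.

Definition labs (x : letter) : nat := match x with Pos i => i | Neg i => i end.
Definition isneg (x : letter) : bool := match x with Pos _ => false | Neg _ => true end.
Definition flip (x : letter) : letter := match x with Pos i => Neg i | Neg i => Pos i end.

Definition letter_eqb (x y : letter) : bool :=
  (isneg x == isneg y) && (labs x == labs y).

(* the total order <_2 : 1 < 2 < 3 < ... < \bar3 < \bar2 < \bar1 *)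
Definition lt2 (x y : letter) : bool :=
  match x, y with
  | Pos i, Pos j => i < j
  | Pos _, Neg _ => true
  | Neg _, Pos _ => false
  | Neg i, Neg j => j < i
  end.

Definition Iind (x y : letter) : bool := lt2 y x || (letter_eqb x y && isneg x).

Definition is_partition (la : seq nat) : bool := sorted geq la && all (fun p => 0 < p) la.

(* height of column i (1-based) *)
Definition colh (la : seq nat) (i : nat) : nat := nth 0 la i.-1.

(* cell (r,i): row r from the bottom, column i from the left (both 1-based) *)
Definition in_dg (la : seq nat) (r i : nat) : bool :=
  [&& 1 <= i, i <= size la, 1 <= r & r <= colh la i].

Definition filling := nat -> nat -> letter.

Definition is_super_filling (la : seq nat) (s : filling) : Prop :=
  forall r i, in_dg la r i -> 0 < labs (s r i).

Definition leg (la : seq nat) (r i : nat) : nat := colh la i - r.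

Definition descent (s : filling) (r i : nat) : bool := (1 < r) && Iind (s r i) (s r.-1 i).

Definition maj (la : seq nat) (s : filling) : nat :=
  \sum_(1 <= i < (size la).+1) \sum_(2 <= r < (colh la i).+1)
     (if descent s r i then (leg la r i).+1 else 0).

Definition Phi (u : nat * nat) (s : filling) : filling :=
  fun r i => if (r == u.1) && (i == u.2) then flip (s r i) else s r i.

Definition dist_label (la : seq nat) (s : filling) (a : nat) : Prop :=
  0 < a /\
  (exists r j, in_dg la r j /\ labs (s r j) = a /\ a < r) /\
  (forall b, 0 < b < a -> ~ exists r j, [/\ in_dg la r j, labs (s r j) = b & b < r]).

(* (r,j) comes strictly before (r',j') in reading order:
   rows top to bottom, each row right to left *)
Definition reading_before (r' j' r j : nat) : bool := (r < r') || ((r == r') && (j < j')).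

Definition dist_cell (la : seq nat) (s : filling) (a r j : nat) : Prop :=
  in_dg la r j /\ labs (s r j) = a /\
  forall r' j', in_dg la r' j' -> reading_before r' j' r j -> labs (s r' j') <> a.

From mathcomp Require Import all_boot.
From mathcomp Require Import zify.

Set Implicit Arguments. Unset Strict Implicit. Unset Printing Implicit Defensive.

(* The argument is local to the column i of the flipped cell u = (r, i):
   only the descent statuses of u itself and of the cell u' = (r+1, i) just
   above it can change.  Minimality of the distinguished label a forces the
   entry below u to have absolute value >= a, and the entry above u (if any)
   to have absolute value > a (it differs from a because it precedes the
   distinguished cell in reading order).  With these bounds, a positive a at
   u is no descent while u' is one, and a negative \bar a at u is a descent
   while u' is not.  Since leg(u) + 1 = leg(u') + 2, replacing a by \bar a
   raises maj by exactly one. *)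

Lemma sum_indicator (m n c v : nat) :
  \sum_(m <= k < n) (if k == c then v else 0) = if m <= c < n then v else 0.
Proof.
case: ifP => Hc.
  rewrite (bigD1_seq c) ?mem_index_iota ?iota_uniq //= eqxx big1 ?addn0 //.
  by move=> k /negPf ->.
rewrite big1_seq // => k /andP[_]; rewrite mem_index_iota.
by case: eqP => // ->; rewrite Hc.
Qed.

Definition col_maj (la : seq nat) (s : filling) (i : nat) : nat :=
  \sum_(2 <= k < (colh la i).+1) (if descent s k i then (leg la k i).+1 else 0).

Lemma col_maj_shift la (s t : filling) i r :
  2 <= r <= colh la i ->
  (forall k, k != r -> k != r.+1 -> descent t k i = descent s k i) ->
  descent s r i = false -> descent t r i = true ->
  (r < colh la i -> descent s r.+1 i = true /\ descent t r.+1 i = false) ->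
  col_maj la t i = (col_maj la s i).+1.
Proof.
move=> /andP[r2 rh] Hk Hs Ht Hnext.
set h := colh la i.
have E : col_maj la t i + \sum_(2 <= k < h.+1) (if k == r.+1 then h - r else 0)
       = col_maj la s i + \sum_(2 <= k < h.+1) (if k == r then (h - r).+1 else 0).
  rewrite /col_maj -!big_split /=.
  apply: eq_big_seq => k; rewrite mem_index_iota => /andP[k2 kh].
  rewrite /leg -/h.
  case: (eqVneq k r) => [->|kr].
    by rewrite Hs Ht (ltn_eqF (ltnSn r)) addn0 add0n.
  case: (eqVneq k r.+1) => [Ek|kr1]; last by rewrite Hk.
  by subst k; have [-> ->] := Hnext kh; lia.
by move: E; rewrite !sum_indicator; case: ifP; case: ifP; lia.
Qed.

Lemma maj_shift la (s t : filling) i :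
  1 <= i <= size la ->
  (forall i', i' != i -> col_maj la t i' = col_maj la s i') ->
  col_maj la t i = (col_maj la s i).+1 ->
  maj la t = (maj la s).+1.
Proof.
move=> Hi Hother Hcol.
have E : maj la t = maj la s + \sum_(1 <= k < (size la).+1) (if k == i then 1 else 0).
  rewrite /maj -big_split /=; apply: eq_bigr => k _.
  case: (eqVneq k i) => [->|ki]; first by rewrite -/(col_maj la t i) Hcol addn1.
  by rewrite addn0 -/(col_maj la t k) Hother.
by rewrite E sum_indicator ltnS Hi addn1.
Qed.

Lemma descent_agree (s t : filling) k i :
  t k i = s k i -> t k.-1 i = s k.-1 i -> descent t k i = descent s k i.
Proof. by rewrite /descent => -> ->. Qed.

Lemma Iind_PosL a y : a <= labs y -> Iind (Pos a) y = false.
Proof. by case: y => c /= H; rewrite /Iind /letter_eqb /=; lia. Qed.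
Lemma Iind_NegL a y : a <= labs y -> Iind (Neg a) y = true.
Proof. by case: y => c /= H; rewrite /Iind /letter_eqb /=; lia. Qed.
Lemma Iind_PosR a x : a < labs x -> Iind x (Pos a) = true.
Proof. by case: x => c /= H; rewrite /Iind /letter_eqb /=; lia. Qed.
Lemma Iind_NegR a x : a < labs x -> Iind x (Neg a) = false.
Proof. by case: x => c /= H; rewrite /Iind /letter_eqb /=; lia. Qed.

Lemma maj_flip_cell la (s t : filling) r i a :
  in_dg la r i -> 1 < r ->
  (forall r' i', (r' != r) || (i' != i) -> t r' i' = s r' i') ->
  s r i = Pos a -> t r i = Neg a ->
  a <= labs (s r.-1 i) ->
  (r < colh la i -> a < labs (s r.+1 i)) ->
  maj la t = (maj la s).+1.
Proof.
move=> /and4P[i1 isz _ rh] r2 Hagree Hs Ht below above.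
have Hbelow : t r.-1 i = s r.-1 i by apply: Hagree; rewrite (ltn_eqF _) //; lia.
have Habove : t r.+1 i = s r.+1 i by apply: Hagree; rewrite gtn_eqF.
apply: (@maj_shift la s t i); first by rewrite i1.
  move=> i' ne; apply: eq_bigr => k _.
  by rewrite (@descent_agree s t) // Hagree // ne orbT.
apply: (@col_maj_shift la s t i r); first by rewrite r2.
- move=> k kr kr1; apply: descent_agree; apply: Hagree; rewrite ?kr //.
  by apply/orP; left; apply/eqP; lia.
- by rewrite /descent Hs Iind_PosL // andbF.
- by rewrite /descent Ht Hbelow Iind_NegL // andbT.
- move=> rlt; have Ha := above rlt.
  by rewrite /descent Hs Ht Habove Iind_PosR // Iind_NegR // andbF andbT ltnW.
Qed.

Lemma Phi_at (u : nat * nat) (s : filling) : Phi u s u.1 u.2 = flip (s u.1 u.2).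
Proof. by rewrite /Phi !eqxx. Qed.

Lemma Phi_off (u : nat * nat) (s : filling) r' i' :
  (r' != u.1) || (i' != u.2) -> Phi u s r' i' = s r' i'.
Proof. by rewrite /Phi; case: eqP; case: eqP. Qed.

Section Distinguished.

Variables (la : seq nat) (s : filling) (a : nat).
Hypothesis super : is_super_filling la s.
Hypothesis label : dist_label la s a.

Lemma dist_label_row_le r' j' :
  in_dg la r' j' -> labs (s r' j') < a -> r' <= labs (s r' j').
Proof.
move=> Hd lt; case: label => _ [_ Hmin].
rewrite leqNgt; apply/negP => gt.
by apply: (Hmin (labs (s r' j'))); [rewrite lt super | exists r', j'].
Qed.

Variables (r j : nat).
Hypothesis cell : dist_cell la s a r j.

Lemma dist_cell_row_gt : a < r.
Proof.
case: label => _ [[r0 [j0 [Hd0 [Hl0 ar0]]]] _]; case: cell => _ [_ Hbefore].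
case: (leqP r0 r) => H; first by lia.
by case: (Hbefore r0 j0 Hd0); rewrite /reading_before ?H.
Qed.

Lemma dist_below i : in_dg la r i -> a <= labs (s r.-1 i).
Proof.
move=> /and4P[i1 isz r1 rh]; have ar := dist_cell_row_gt.
have a0 : 0 < a by case: label.
have Hd : in_dg la r.-1 i by apply/and4P; split; lia.
rewrite leqNgt; apply/negP => lt.
by have := dist_label_row_le Hd lt; lia.
Qed.

(* The entry above a cell of row r has absolute value > a: it cannot be a,
   as it precedes the distinguished cell in reading order. *)
Lemma dist_above i :
  in_dg la r i -> r < colh la i -> a < labs (s r.+1 i).
Proof.
move=> /and4P[i1 isz r1 rh] rlt; have ar := dist_cell_row_gt.
have Hd : in_dg la r.+1 i by apply/and4P; split; lia.
have ne : labs (s r.+1 i) <> a.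
  by case: cell => _ [_ Hbefore]; apply: Hbefore; rewrite // /reading_before ltnSn.
rewrite ltn_neqAle; apply/andP; split; first by apply/eqP => /esym.
rewrite leqNgt; apply/negP => lt.
by have := dist_label_row_le Hd lt; lia.
Qed.

End Distinguished.

Theorem mainTheorem9 (la : seq nat) (s : filling) (a r j i : nat) :
  is_partition la ->
  is_super_filling la s ->
  dist_label la s a ->
  dist_cell la s a r j ->
  in_dg la r i ->
  labs (s r i) = a ->
  (s r i = Pos a -> maj la (Phi (r, i) s) = (maj la s).+1) /\
  (s r i = Neg a -> (maj la (Phi (r, i) s)).+1 = maj la s).
Proof.
move=> _ super label cell Hdg _.
have r2 : 1 < r.
  by have [a0 _] := label; have := dist_cell_row_gt label cell; lia.
have below := dist_below super label cell Hdg.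
have above := dist_above super label cell Hdg.
have Hoff := @Phi_off (r, i) s.
have Hat : Phi (r, i) s r i = flip (s r i) := Phi_at (r, i) s.
have Hbelow : Phi (r, i) s r.-1 i = s r.-1 i by apply: Hoff; rewrite /= ltn_eqF //; lia.
have Habove : Phi (r, i) s r.+1 i = s r.+1 i by apply: Hoff; rewrite /= gtn_eqF.
split => Hsr.
- by apply: (maj_flip_cell Hdg r2 Hoff Hsr); rewrite ?Hat ?Hsr.
- apply/esym/(maj_flip_cell Hdg r2); rewrite ?Hat ?Hsr ?Hbelow ?Habove //.
  by move=> r' i' ne; rewrite Hoff.
Qed.
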